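(* Let $\beta,\kappa\ge0$. Let $\hat\sigma\sim\mu_{N,\beta,\kappa}$ and $\hat\sigma'\sim\mu_{N,\infty,\kappa}$ be independent, let $E=E_{\hat\sigma,\hat\sigma'}$, and set $\sigma=\hat\sigma$ and $\sigma'=\hat\sigma'|_E+\hat\sigma|_{E_N\setminus E}$. Then $\sigma'$ has law $\mu_{N,\infty,\kappa}$; thus the law $\mu_{N,(\beta,\kappa),(\infty,\kappa)}$ of $(\sigma,\sigma')$ is a coupling of $\mu_{N,\beta,\kappa}$ and $\mu_{N,\infty,\kappa}$.
   Context: $G=\mathbb Z_n$, $\rho$ faithful unitary one-dimensional. On $\mathbb Z^4$: $E_N,P_N$ oriented edges/plaquettes with vertices in $B_N=[-N,N]^4\cap\mathbb Z^4$; $\partial p$ oriented boundary edges; $\hat\partial e=\{p:e\in\partial p\}$. $\Sigma_{E_N}$: $\sigma:E_N\to G$, $\sigma_{-e}=-\sigma_e$, $(d\sigma)_p=\sum_{e\in\partial p}\sigma_e$; $\Sigma^0_{E_N}=\{d\sigma=0\}$. $\mu_{N,\beta,\kappa}(\sigma)\propto\exp(\beta\sum_{p\in P_N}\rho((d\sigma)_p)+\kappa\sum_{e\in E_N}\rho(\sigma_e))$ on $\Sigma_{E_N}$; $\mu_{N,\infty,\kappa}(\sigma)\propto\exp(\kappa\sum_{e\in E_N}\rho(\sigma_e))$ on $\Sigma^0_{E_N}$. $f|_S$ equals $f$ on $S$ and $0$ elsewhere. $\mathcal G(\sigma,\sigma')$ is the graph on $E_N$ with an edge between distinct $e,e'$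 if $e'=-e$, or $e,e'\in\mathrm{supp}\,\sigma\cup\mathrm{supp}\,\sigma'$ and ($\hat\partial e\cap\hat\partial e'\ne\emptyset$ or $\hat\partial e\cap\hat\partial(-e')\ne\emptyset$); $\mathcal C_{\mathcal G}(A)$ is the union of components meeting $A$; $E_{\sigma,\sigma'}=\mathcal C_{\mathcal G(\sigma,\sigma')}(\mathrm{supp}\,\sigma\cap\bigcup_{p\in\mathrm{supp}\,d\sigma}\partial p)$. *)

From mathcomp Require Import all_boot all_order all_algebra.
From mathcomp Require Import reals.
From mathcomp.analysis Require Import sequences exp.
From mathcomp.real_closed Require Import complex.

Set Implicit Arguments.
Unset Strict Implicit.
Unset Printing Implicit Defensive.
Import GRing.Theory Num.Theory.
Local Open Scope ring_scope.

(* The box B_N = [-N,N]^4 ∩ Z^4, coordinates shifted by N: a vertex is a   *)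
(* map 'I_4 -> {0,..,2N}, coordinate c standing for c - N.                 *)
Definition vtx (N : nat) := {ffun 'I_4 -> 'I_(N.*2).+1}.

(* x + e_i (only used when x i < 2N, so no truncation happens) *)
Definition vshift N (x : vtx N) (i : 'I_4) : vtx N :=
  [ffun k => if k == i then inord (x k).+1 else x k].

(* Raw oriented edges: (x, i, true) is the positively oriented edge from x  *)
(* to x + e_i; (x, i, false) is its reverse (from x + e_i to x).            *)
Definition redge N := (vtx N * 'I_4 * bool)%type.
Definition in_EN N (r : redge N) : bool := (r.1.1 r.1.2 < N.*2)%N.
(* E_N : oriented edges with both endpoints in B_N *)
Definition edge N := {r : redge N | in_EN r}.
Definition rneg N (r : redge N) : redge N := (r.1, ~~ r.2).

(* Raw oriented plaquettes: (x, i, j), i <> j, with corners x, x+e_i,      *)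
(* x+e_i+e_j, x+e_j traversed in that order; (x, j, i) is the reverse.     *)
Definition rplaq N := (vtx N * 'I_4 * 'I_4)%type.
Definition in_PN N (p : rplaq N) : bool :=
  [&& p.1.2 != p.2, (p.1.1 p.1.2 < N.*2)%N & (p.1.1 p.2 < N.*2)%N].
(* P_N : oriented plaquettes with all vertices in B_N *)
Definition plaq N := {p : rplaq N | in_PN p}.

Definition bd_raw N (p : rplaq N) : seq (redge N) :=
  let: (x, i, j) := p in
  [:: (x, i, true); (vshift x i, j, true); (vshift x j, i, false); (x, j, false)].

Definition in_bd N (r : redge N) (p : plaq N) : bool := r \in bd_raw (val p).

Definition conf N n := {ffun edge N -> 'Z_n}.

Definition ext N n (s : conf N n) (r : redge N) : 'Z_n :=
  if (insub r : option (edge N)) is Some e then s e else 0.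

Definition antisym N n (s : conf N n) : bool :=
  [forall e : edge N, ext s (rneg (val e)) == - s e].

Definition dconf N n (s : conf N n) (p : plaq N) : 'Z_n :=
  \sum_(r <- bd_raw (val p)) ext s r.

Definition closedconf N n (s : conf N n) : bool :=
  antisym s && [forall p : plaq N, dconf s p == 0].

Definition faithful_unitary_char (R : rcfType) n (rho : 'Z_n -> R[i]) : Prop :=
  [/\ (forall a b : 'Z_n, rho (a + b) = rho a * rho b),
      (forall a : 'Z_n, `|rho a| = 1) & injective rho].

Section Measures.
Variables (R : realType) (n N : nat) (rho : 'Z_n -> R[i]).

(* The exponent β Σ_p ρ((dσ)_p) + κ Σ_e ρ(σ_e) is real on Σ_{E_N} (sums    *)
(* over both orientations); we exponentiate its real part.                 *)
Definition weightBK (beta kappa : R) (s : conf N n) : R :=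
  if antisym s then
    expR (complex.Re ((beta%:C)%C * \sum_(p : plaq N) rho (dconf s p)
                      + (kappa%:C)%C * \sum_(e : edge N) rho (s e)))
  else 0.

Definition weightInf (kappa : R) (s : conf N n) : R :=
  if closedconf s then
    expR (complex.Re ((kappa%:C)%C * \sum_(e : edge N) rho (s e)))
  else 0.

Definition muBK (beta kappa : R) (s : conf N n) : R :=
  weightBK beta kappa s / \sum_(t : conf N n) weightBK beta kappa t.

Definition muInf (kappa : R) (s : conf N n) : R :=
  weightInf kappa s / \sum_(t : conf N n) weightInf kappa t.
End Measures.

Definition supp N n (s : conf N n) (e : edge N) : bool := s e != 0.

Definition gadj N n (s s' : conf N n) : rel (edge N) := fun e e' =>
  (e != e') &&
  ((val e' == rneg (val e)) ||
   [&& supp s e || supp s' e, supp s e' || supp s' e' &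
       [exists p : plaq N, in_bd (val e) p && in_bd (val e') p] ||
       [exists p : plaq N, in_bd (val e) p && in_bd (rneg (val e')) p]]).

Definition compsG N n (s s' : conf N n) (A : {set edge N}) : {set edge N} :=
  [set e | [exists a in A, connect (gadj s s') a e]].

Definition Eset N n (s s' : conf N n) : {set edge N} :=
  compsG s s' [set e | supp s e &&
                  [exists p : plaq N, (dconf s p != 0) && in_bd (val e) p]].

Definition newconf N n (s s' : conf N n) : conf N n :=
  [ffun e => if e \in Eset s s' then s' e else s e].

From mathcomp Require Import all_boot all_order all_algebra.
From mathcomp Require Import reals.
From mathcomp.analysis Require Import sequences exp.
From mathcomp.real_closed Require Import complex.
Import GRing.Theory Num.Theory.
Local Open Scope ring_scope.
Set Implicit Arguments.
Unset Strict Implicit.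

(* Write E = E_{σ̂,σ̂'} and let mixconf A s t be the
   configuration equal to t on A and to s off A, so that σ' = mixconf E σ̂ σ̂'
   and its companion τ = mixconf E σ̂' σ̂ swaps the roles of σ̂ and σ̂' on E.
   Because E is a union of components of G(σ̂,σ̂'), a plaquette p either sees
   all supported edges of ∂p inside E or none of them, and in the latter case
   (dσ̂)_p = 0.  Hence for σ̂ ∈ Σ_{E_N} and σ̂' ∈ Σ^0_{E_N}:
   dτ = dσ̂ and dσ' = 0, E is symmetric under e ↦ -e (so antisymmetry is kept),
   τ and σ' have the same joint support and seeds as σ̂ and σ̂', hence
   E_{τ,σ'} = E, and the swap Φ : (σ̂,σ̂') ↦ (τ,σ') is an involution.
   Pointwise ρ(τ_e) + ρ(σ'_e) = ρ(σ̂_e) + ρ(σ̂'_e), so Φ preserves the product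
   weight of μ_{N,β,κ} ⊗ μ_{N,∞,κ}.  Reindexing the double sum along Φ turns
   the law of σ' into the second marginal, which is μ_{N,∞,κ}; the first
   marginal is μ_{N,β,κ} directly. *)

Section Configurations.
Variables (N n : nat).
Implicit Types (s t u v : conf N n) (p : plaq N) (A : {set edge N}).

Definition mixconf A s t : conf N n := [ffun e => if e \in A then t e else s e].

Lemma newconfE s s' : newconf s s' = mixconf (Eset s s') s s'.
Proof. by []. Qed.

Lemma dconf_eq_bd u v p :
  (forall e : edge N, in_bd (val e) p -> u e = v e) -> dconf u p = dconf v p.
Proof.
move=> Huv; apply: eq_big_seq => r r_bd; rewrite /ext.
by case: insubP => [e _ Hr|//]; apply: Huv; rewrite /in_bd Hr.
Qed.

Lemma dconf_mix_in A s t p :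
  (forall e : edge N, in_bd (val e) p -> s e != t e -> e \in A) ->
  dconf (mixconf A s t) p = dconf t p.
Proof.
move=> HA; apply: dconf_eq_bd => e e_bd; rewrite ffunE; case: ifP => // /negbT eA.
by apply/eqP; apply: contraNT eA; exact: HA.
Qed.

Lemma dconf_mix_out A s t p :
  (forall e : edge N, in_bd (val e) p -> s e != t e -> e \notin A) ->
  dconf (mixconf A s t) p = dconf s p.
Proof.
move=> HA; apply: dconf_eq_bd => e e_bd; rewrite ffunE; case: ifP => // eA.
by apply/esym/eqP; apply: contraTT eA; exact: HA.
Qed.

Lemma dconf_neq0_supp u p :
  dconf u p != 0 -> exists2 e : edge N, in_bd (val e) p & supp u e.
Proof.
move=> dp; suff /existsP[e /andP[e_bd ue]] : [exists e : edge N, in_bd (val e) p && supp u e].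
  by exists e.
apply: contraNT dp; rewrite negb_exists => /forallP no_e; apply/eqP.
apply: big1_seq => r /= r_bd; rewrite /ext; case: insubP => [e _ Hr|//]; apply/eqP.
by move: (no_e e); rewrite /in_bd Hr r_bd /supp negbK.
Qed.

Lemma neq_supp s t (e : edge N) : s e != t e -> supp s e || supp t e.
Proof. by apply: contraR; rewrite negb_or /supp !negbK => /andP[/eqP-> /eqP->]. Qed.

Definition neg_closed A :=
  forall e e' : edge N, val e' = rneg (val e) -> (e \in A) = (e' \in A).

Lemma antisym_mix A s t :
  neg_closed A -> antisym s -> antisym t -> antisym (mixconf A s t).
Proof.
move=> HA /forallP Hs /forallP Ht; apply/forallP => e.
move: (Hs e) (Ht e); rewrite /ext; case: insubP => [e' _ He'|_] /=; rewrite !ffunE.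
  by rewrite -(HA _ _ He'); case: (e \in A).
by case: (e \in A).
Qed.

Lemma supp_mix_swap A s t (e : edge N) :
  supp (mixconf A t s) e || supp (mixconf A s t) e = supp s e || supp t e.
Proof. by rewrite /supp !ffunE; case: (e \in A) => //; rewrite orbC. Qed.

Lemma gadj_supp s t u v :
  (forall e, supp u e || supp v e = supp s e || supp t e) -> gadj u v =2 gadj s t.
Proof. by move=> Hsupp e e'; rewrite /gadj !Hsupp. Qed.

Lemma rneg_neq (r : redge N) : rneg r != r.
Proof. by case: r => [x b]; rewrite /rneg /= xpair_eqE eqxx /=; case: b. Qed.

Lemma rnegK (r : redge N) : rneg (rneg r) = r.
Proof. by case: r => [x b]; rewrite /rneg /= negbK. Qed.

Definition seeds s : {set edge N} :=
  [set e | supp s e && [exists p : plaq N, (dconf s p != 0) && in_bd (val e) p]].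

Lemma EsetE s s' : Eset s s' = compsG s s' (seeds s).
Proof. by []. Qed.

Section ComponentSet.
Variables (s s' : conf N n).
Local Notation E := (Eset s s').

Lemma Eset_connect e0 e : e0 \in E -> connect (gadj s s') e0 e -> e \in E.
Proof.
rewrite EsetE /compsG !inE => /exists_inP[a a_seed a_e0] e0_e.
by apply/exists_inP; exists a => //; exact: connect_trans e0_e.
Qed.

Lemma Eset_seed e p : supp s e -> in_bd (val e) p -> dconf s p != 0 -> e \in E.
Proof.
move=> se e_bd dp; rewrite EsetE /compsG inE; apply/exists_inP; exists e => //.
by rewrite inE se; apply/existsP; exists p; rewrite dp.
Qed.

(* Supported edges on a common plaquette boundary are adjacent in G, so E
   contains all of them as soon as it contains one. *)
Lemma Eset_plaquette e0 e p :
  e0 \in E -> in_bd (val e0) p -> supp s e0 || supp s' e0 ->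
  in_bd (val e) p -> supp s e || supp s' e -> e \in E.
Proof.
move=> e0E e0_bd e0_supp e_bd e_supp; have [<-//|ne] := eqVneq e0 e.
apply: (Eset_connect e0E); apply: connect1; rewrite /gadj ne e0_supp e_supp /=.
by apply/orP; right; apply/orP; left; apply/existsP; exists p; rewrite e0_bd.
Qed.

(* e and -e are adjacent in G, hence E is closed under orientation reversal. *)
Lemma Eset_neg_closed : neg_closed E.
Proof.
have step (a b : edge N) : val b = rneg (val a) -> a \in E -> b \in E.
  move=> Hab aE; apply: (Eset_connect aE); apply: connect1.
  rewrite /gadj Hab eqxx orTb andbT; apply: contraNneq (rneg_neq (val a)).
  by move=> ab; rewrite -Hab ab.
by move=> a b Hab; apply/idP/idP; apply: step; rewrite // Hab rnegK.
Qed.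

Lemma dconf_swap p : closedconf s' ->
  dconf (mixconf E s' s) p = dconf s p /\ dconf (mixconf E s s') p = 0.
Proof.
case/andP=> _ /forallP/(_ p)/eqP ds'p.
have [touch|no_touch] :=
  boolP [exists e : edge N, [&& e \in E, in_bd (val e) p & supp s e || supp s' e]].
  have{touch} all_in (e : edge N) : in_bd (val e) p -> supp s e || supp s' e -> e \in E.
    case/existsP: touch => e0 /and3P[e0E e0_bd e0_supp].
    exact: Eset_plaquette e0E e0_bd e0_supp.
  rewrite !dconf_mix_in // => e e_bd /neq_supp; last by rewrite orbC; exact: all_in.
  exact: all_in.
have out (e : edge N) : in_bd (val e) p -> supp s e || supp s' e -> e \notin E.
  by move=> e_bd e_supp; apply: contraNN no_touch => eE; apply/existsP; exists e; apply/and3P.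
have dsp : dconf s p = 0.
  apply/eqP; apply: contraNT no_touch => /[dup] dp /dconf_neq0_supp[e e_bd se].
  by apply/existsP; exists e; rewrite (Eset_seed se e_bd dp) e_bd se.
split; rewrite dconf_mix_out ?ds'p ?dsp // => e e_bd /neq_supp; last exact: out.
by rewrite orbC; exact: out.
Qed.

Lemma supp_swap_bd e p : dconf s p != 0 -> in_bd (val e) p ->
  supp (mixconf E s' s) e = supp s e.
Proof.
move=> dp e_bd; rewrite /supp ffunE; case: ifP => // /negbT eNE.
have se0 : s e = 0 by apply/eqP; apply: contraNT eNE => se; exact: Eset_seed se e_bd dp.
have [e1 e1_bd se1] := dconf_neq0_supp dp.
rewrite se0 eqxx; apply/negbTE; apply: contraNN eNE => s'e.
by apply: (Eset_plaquette (Eset_seed se1 e1_bd dp) e1_bd); rewrite ?se1 // /supp s'e orbT.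
Qed.

Lemma Eset_swap : closedconf s' -> Eset (mixconf E s' s) (mixconf E s s') = E.
Proof.
move=> cs'; have dtau p := (dconf_swap p cs').1.
rewrite !EsetE; have -> : seeds (mixconf E s' s) = seeds s.
  apply/setP => e; rewrite !inE.
  under eq_existsb => p do rewrite dtau.
  case: existsP => [[p /andP[dp e_bd]]|_]; last by rewrite !andbF.
  by rewrite (supp_swap_bd dp e_bd).
rewrite /compsG; apply/setP => e; rewrite !inE; apply: eq_existsb => a.
by rewrite (eq_connect (gadj_supp (supp_mix_swap E s s'))).
Qed.

Lemma swap_involutive : closedconf s' ->
  let t := mixconf E s' s in let t' := mixconf E s s' in
  mixconf (Eset t t') t' t = s /\ mixconf (Eset t t') t t' = s'.
Proof.
by move=> cs' /=; rewrite Eset_swap //; split; apply/ffunP => e; rewrite !ffunE;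
  case: (e \in E).
Qed.

End ComponentSet.

Lemma closedconf0 : closedconf ([ffun => 0] : conf N n).
Proof.
have ext0 r : ext ([ffun => 0] : conf N n) r = 0.
  by rewrite /ext; case: insubP => [e _ _|//]; rewrite ffunE.
apply/andP; split; apply/forallP => x; first by rewrite ext0 ffunE oppr0.
by rewrite /dconf big1 // => r _; rewrite ext0.
Qed.

End Configurations.

Lemma ReD (R : rcfType) (a b : R[i]) : complex.Re (a + b) = complex.Re a + complex.Re b.
Proof. by case: a => ? ?; case: b. Qed.

Lemma sum_delta (T : finType) (R : pzRingType) (F : T -> R) (t0 : T) :
  \sum_t F t * (t == t0)%:R = F t0.
Proof.
rewrite (bigD1 t0) //= eqxx mulr1 big1 ?addr0 // => t /negbTE->.
by rewrite mulr0.
Qed.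

Lemma double_sum_div (T : finType) (R : fieldType) (f g : T -> R)
    (c : T -> T -> R) (a b : R) :
  \sum_s \sum_s' (f s / a) * (g s' / b) * c s s'
  = (\sum_s \sum_s' f s * g s' * c s s') / (a * b).
Proof.
rewrite mulr_suml; apply: eq_bigr => s _; rewrite mulr_suml.
by apply: eq_bigr => s' _; rewrite mulf_div mulrAC.
Qed.

Section Coupling.
Variables (R : realType) (n N : nat) (rho : 'Z_n -> R[i]) (beta kappa : R).
Local Notation wB := (@weightBK R n N rho beta kappa).
Local Notation wI := (@weightInf R n N rho kappa).
Implicit Types (x : conf N n * conf N n).

Definition pair_weight x := wB x.1 * wI x.2.

Definition admissible x := antisym x.1 && closedconf x.2.

Definition swap x :=
  if admissible x then (mixconf (Eset x.1 x.2) x.2 x.1, newconf x.1 x.2) else x.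

Lemma swap_admissible x : admissible x -> admissible (swap x).
Proof.
case: x => s s' /andP[sA cs]; rewrite /swap /admissible /= sA cs /=.
have s'A : antisym s' by case/andP: cs.
have Eneg := Eset_neg_closed s s'.
rewrite antisym_mix //=; apply/andP; split; first exact: antisym_mix.
by apply/forallP => p; rewrite (dconf_swap s p cs).2.
Qed.

Lemma swapK : involutive swap.
Proof.
move=> x; have [adm|nadm] := boolP (admissible x); last first.
  by rewrite /swap (negbTE nadm) (negbTE nadm).
rewrite {1}/swap (swap_admissible adm) /swap adm /=.
case: x adm => s s' /andP[_ cs] /=; rewrite !newconfE.
by case: (swap_involutive s cs) => -> ->.
Qed.

Lemma pair_weight_swap x : pair_weight (swap x) = pair_weight x.
Proof.
have [adm|] := boolP (admissible x); last by rewrite /swap => /negbTE->.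
have := swap_admissible adm; rewrite /swap adm; case: x adm => s s' /andP[sA cs] /andP[tA ct].
rewrite /pair_weight /weightBK /weightInf /= sA cs tA ct -!expRD -!ReD.
congr (expR (complex.Re _)).
under eq_bigr => p _ do rewrite (dconf_swap s p cs).1.
rewrite -!addrA -!mulrDr -!big_split /=; congr (_ + (_ * _)).
by apply: eq_bigr => e _; rewrite !ffunE; case: (e \in Eset s s'); rewrite // addrC.
Qed.

Lemma pair_weight_nonadmissible x : ~~ admissible x -> pair_weight x = 0.
Proof.
case: x => s s'; rewrite /admissible /pair_weight /weightBK /weightInf /= negb_and.
by case/orP => /negbTE->; rewrite ?mul0r ?mulr0.
Qed.

Lemma sum_newconf (s0 : conf N n) :
  \sum_s \sum_s' wB s * wI s' * (newconf s s' == s0)%:R = (\sum_s wB s) * wI s0.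
Proof.
have newconf_swap s s' : wB s * wI s' * (newconf s s' == s0)%:R
    = pair_weight (s, s') * ((swap (s, s')).2 == s0)%:R.
  rewrite /swap; case: ifP => // /negbT nadm.
  by have := pair_weight_nonadmissible nadm; rewrite /pair_weight /= => ->; rewrite !mul0r.
under eq_bigr => s _ do under eq_bigr => s' _ do rewrite newconf_swap.
rewrite pair_bigA /=; under eq_bigr => x _ do rewrite -surjective_pairing.
rewrite (reindex_inj (can_inj swapK)) /=.
under eq_bigr => x _ do rewrite swapK pair_weight_swap.
rewrite -(pair_bigA _ (fun s s' => pair_weight (s, s') * (s' == s0)%:R)) /= mulr_suml.
by apply: eq_bigr => s _; rewrite sum_delta.
Qed.

(* The partition functions are positive: the zero configuration has
   positive weight in both models. *)
Lemma partitionBK_gt0 : 0 < \sum_(t : conf N n) wB t.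
Proof.
rewrite (bigD1 [ffun => 0]) //=; apply: ltr_wpDr.
  by apply: sumr_ge0 => t _; rewrite /weightBK; case: ifP => // _; exact: expR_ge0.
by rewrite /weightBK; case/andP: (closedconf0 N n) => -> _; exact: expR_gt0.
Qed.

Lemma partitionInf_gt0 : 0 < \sum_(t : conf N n) wI t.
Proof.
rewrite (bigD1 [ffun => 0]) //=; apply: ltr_wpDr.
  by apply: sumr_ge0 => t _; rewrite /weightInf; case: ifP => // _; exact: expR_ge0.
by rewrite /weightInf closedconf0; exact: expR_gt0.
Qed.

End Coupling.

Theorem mainTheorem14 (R : realType) (n N : nat) (rho : 'Z_n -> R[i])
  (beta kappa : R) :
  (1 < n)%N -> faithful_unitary_char rho -> 0 <= beta -> 0 <= kappa ->
  (forall s0 : conf N n,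
     \sum_(s : conf N n) \sum_(s' : conf N n)
        muBK rho beta kappa s * muInf rho kappa s' * (newconf s s' == s0)%:R
     = muInf rho kappa s0) /\
  (forall s0 : conf N n,
     \sum_(s : conf N n) \sum_(s' : conf N n)
        muBK rho beta kappa s * muInf rho kappa s' * (s == s0)%:R
     = muBK rho beta kappa s0).
Proof.
move=> _ _ _ _.
have ZB0 := lt0r_neq0 (@partitionBK_gt0 R n N rho beta kappa).
have ZI0 := lt0r_neq0 (@partitionInf_gt0 R n N rho kappa).
split=> s0; rewrite /muBK /muInf double_sum_div.
  by rewrite sum_newconf invfM mulrACA divff // mul1r.
under eq_bigr => s _ do under eq_bigr => s' _ do rewrite mulrAC.
under eq_bigr => s _ do rewrite -mulr_sumr.
by rewrite -mulr_suml sum_delta invfM mulrACA mulfV // mulr1.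
Qed.
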